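(* Let $\mathcal{C}$ be a fusion category and let $G(\mathcal{C})$ be the group of isomorphism classes of invertible simple objects. Suppose that $|G(\mathcal{C})|$ is a power of a prime $p$ and that $\gcd(|\mathrm{Irr}_\alpha(\mathcal{C})|, p) = 1$ for some $\alpha > 1$. Then there exists $X \in \mathrm{Irr}_\alpha(\mathcal{C})$ such that $G[X] = G(\mathcal{C})$.
   Context: $\mathrm{Irr}_\alpha(\mathcal{C})$ denotes the set of isomorphism classes of simple objects of $\mathcal{C}$ of Frobenius–Perron dimension $\alpha$. The group $G(\mathcal{C})$ acts on the set of isomorphism classes of simple objects by left tensor product, and $G[X]$ denotes the stabilizer of $X$ under this action (i.e. $\{g : g\otimes X\cong X\}$). *)

(* A fusion category is represented by its (based) fusion
   ring: the statement only concerns isomorphism classes of simple objects,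
   tensor multiplicities and Frobenius–Perron dimensions. *)
From HB Require Import structures.
From mathcomp Require Import all_boot all_order all_algebra.
Set Implicit Arguments. Unset Strict Implicit. Unset Printing Implicit Defensive.
Import Order.TTheory GRing.Theory Num.Theory.

(* Based fusion ring of a fusion category: [T] = isomorphism classes of simple
   objects, [one] = unit object, [dual] = duality, [N i j k] = multiplicity of
   the simple k in i (x) j. *)
Record fusion_ring := FusionRing {
  fr_T :> finType;
  fr_one : fr_T;
  fr_dual : fr_T -> fr_T;
  fr_N : fr_T -> fr_T -> fr_T -> nat;
  fr_unitl : forall j k, fr_N fr_one j k = (j == k);
  fr_unitr : forall i k, fr_N i fr_one k = (i == k);
  fr_assoc : forall i j k l,
    (\sum_m fr_N i j m * fr_N m k l = \sum_m fr_N j k m * fr_N i m l)%N;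
  fr_dualK : involutive fr_dual;
  fr_rigid_one : forall i j, fr_N i j fr_one = (j == fr_dual i);
  fr_recipl : forall i j k, fr_N i j k = fr_N (fr_dual i) k j;
  fr_recipr : forall i j k, fr_N i j k = fr_N k (fr_dual j) i
}.

Section FusionDefs.
Variable C : fusion_ring.

Definition tensor_iso (i j k : C) : Prop :=
  forall l, fr_N i j l = (l == k).

Definition invertibleb (X : C) : bool :=
  [forall l, fr_N X (fr_dual X) l == (l == fr_one C)].

Definition Ginv : {set C} := [set g | invertibleb g].

Definition stab (X : C) : {set C} :=
  [set g in Ginv | [forall l, fr_N g X l == (l == X)]].

(* d is the Frobenius–Perron dimension: the (unique) ring homomorphism from
   the fusion ring to the reals taking positive values on simple objects. *)
Definition is_FPdim (R : realFieldType) (d : C -> R) : Prop :=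
  (forall i, 0 < d i)%R /\
  (forall i j, d i * d j = \sum_k (fr_N i j k)%:R * d k)%R.

Definition Irr_of (R : realFieldType) (d : C -> R) (alpha : R) : {set C} :=
  [set X | d X == alpha].

End FusionDefs.

(* Tensoring with an invertible object g sends a simple X to a simple g (x) X,
   so G(C) acts on the simple objects, and it acts through a p-group of
   permutations.  Every invertible object has Frobenius–Perron dimension 1,
   so the action preserves FPdim and hence Irr_alpha(C).  The fixed
   points of a p-group acting on a finite set are congruent to its size
   modulo p, so a p-group acting on a set of size prime to p has a fixed
   point X, which is exactly G[X] = G(C). *)
From mathcomp Require Import all_boot all_order all_fingroup all_solvable all_algebra.
Import Order.TTheory GRing.Theory Num.Theory.
Set Implicit Arguments. Unset Strict Implicit. Unset Printing Implicit Defensive.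

Lemma sum_nat_delta (I : finType) (k : I) (F : I -> nat) :
  (\sum_m (m == k) * F m = F k)%N.
Proof.
by rewrite (bigD1 k) //= eqxx mul1n big1 ?addn0 // => m /negbTE ->.
Qed.

Lemma sum_sqr_eq1 (I : finType) (f : I -> nat) :
  (\sum_m f m * f m = 1)%N -> exists m, forall l, f l = (l == m).
Proof.
move=> sum1.
have [m fm_neq0] : exists m, f m != 0%N.
  apply/existsP; apply: contraT; rewrite negb_exists => /forallP f0.
  by move: sum1; rewrite big1 // => i _; move/negPn/eqP: (f0 i) => ->.
have fm1 : f m = 1%N.
  move: sum1; rewrite (bigD1 m) //=.
  by case: (f m) fm_neq0 => [|[|k]] //= _; rewrite mulSn addSn addnS.
move: sum1; rewrite (bigD1 m) //= fm1 add1n => /succn_inj rest0.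
exists m => l; case: (eqVneq l m) => [-> //|l_neq_m].
have := sum_nat_eq0 (fun i => i != m) (fun i => f i * f i).
rewrite rest0 eqxx => /esym/forallP/(_ l).
by rewrite l_neq_m muln_eq0 orbb => /eqP.
Qed.

Lemma pgroup_fixed_point (aT : finGroupType) (sT : finType) (D : {group aT})
    (to : action D sT) (p : nat) (H : {group aT}) (S : {set sT}) :
  prime p -> pgroup p H -> [acts H, on S | to] -> coprime #|S| p ->
  exists2 x, x \in S & forall a, a \in H -> to x a = x.
Proof.
move=> p_pr pH actsS coSp.
have [Fix0|[x /setIP[xS /afixP fixx]]] := set_0Vmem 'Fix_(S | to)(H)%g; last by exists x.
move: (pgroup_fix_mod pH actsS); rewrite Fix0 cards0 mod0n => /eqP p_dvd_S.
by move: coSp; rewrite /coprime gcdnC (gcdn_idPl p_dvd_S) => /eqP p1; rewrite p1 in p_pr.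
Qed.

Section InvertibleAction.
Variable C : fusion_ring.
Implicit Types g h X Z : C.

Local Notation one := (fr_one C).
Local Notation G := (Ginv C).

Lemma tensor_iso_inj (i j k k' : C) : tensor_iso i j k -> tensor_iso i j k' -> k = k'.
Proof. by move=> ijk ijk'; move: (ijk' k); rewrite ijk eqxx; case: eqP. Qed.

Lemma GinvP g : reflect (tensor_iso g (fr_dual g) one) (g \in G).
Proof.
by rewrite inE /invertibleb; apply: (iffP forallP) => H l; [apply/eqP|rewrite H].
Qed.

(* Frobenius reciprocity turns the sum of squared multiplicities of
   (dual g) (x) Z into the multiplicity of Z in (g (x) dual g) (x) Z = Z. *)
Lemma dual_Ginv_tensor_simple g Z :
  g \in G -> exists m, tensor_iso (fr_dual g) Z m.
Proof.
move=> /GinvP gg'; apply: sum_sqr_eq1.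
transitivity (\sum_m fr_N (fr_dual g) Z m * fr_N g m Z)%N.
  by apply: eq_bigr => m _; rewrite [fr_N g m Z]fr_recipl.
rewrite -fr_assoc (eq_bigr _ (fun m _ => congr1 (muln^~ _) (gg' m))).
by rewrite sum_nat_delta fr_unitl eqxx.
Qed.

Lemma Ginv_dual g : g \in G -> fr_dual g \in G.
Proof.
move=> gG; have [m g'g] := dual_Ginv_tensor_simple g gG.
suff m1 : m = one by apply/GinvP; rewrite fr_dualK -m1.
by move: (g'g one); rewrite fr_rigid_one fr_dualK eqxx; case: eqP.
Qed.

Lemma Ginv_tensor_simple g Z : g \in G -> exists m, tensor_iso g Z m.
Proof. by move/Ginv_dual/dual_Ginv_tensor_simple; rewrite fr_dualK. Qed.

(* Outside G(C), [gact g] is the identity, so that it is injective for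
   every g. *)
Definition gact g X : C :=
  if g \in G then odflt X [pick m | fr_N g X m == 1%N] else X.

Lemma gactE g X : g \in G -> tensor_iso g X (gact g X).
Proof.
move=> gG; have [m gXm] := Ginv_tensor_simple X gG.
rewrite /gact gG; case: pickP => [y|/(_ m)] /=; last by rewrite gXm eqxx.
by rewrite gXm; case: (eqVneq y m) => [->|].
Qed.

Lemma Ginv1 : one \in G.
Proof.
have dual1 : fr_dual one = one.
  by move: (fr_rigid_one one one); rewrite fr_unitl eqxx; case: eqP.
by apply/GinvP => l; rewrite dual1 fr_unitl eq_sym.
Qed.

Lemma gact1 X : gact one X = X.
Proof. by apply: tensor_iso_inj (gactE X Ginv1) _ => l; rewrite fr_unitl eq_sym. Qed.

Lemma gact_unit g : g \in G -> gact g one = g.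
Proof. by move/(gactE one)/tensor_iso_inj; apply=> l; rewrite fr_unitr eq_sym. Qed.

Lemma tensor_iso_gact_gact g h X : g \in G -> h \in G ->
  tensor_iso (gact g h) X (gact g (gact h X)).
Proof.
move=> gG hG l; rewrite -(sum_nat_delta (gact g h) (fun m => fr_N m X l)).
rewrite -(eq_bigr _ (fun m _ => congr1 (muln^~ _) (gactE h gG m))) fr_assoc.
rewrite (eq_bigr _ (fun m _ => congr1 (muln^~ _) (gactE X hG m))).
by rewrite sum_nat_delta (gactE _ gG).
Qed.

Lemma Ginv_gact g h : g \in G -> h \in G -> gact g h \in G.
Proof.
move=> gG hG; set k := gact g h.
have kX := tensor_iso_gact_gact (fr_dual k) gG hG.
suff k1 : gact g (gact h (fr_dual k)) = one by apply/GinvP; rewrite -k1.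
by move: (kX one); rewrite fr_rigid_one eqxx; case: eqP.
Qed.

Lemma gactA g h X : g \in G -> h \in G -> gact g (gact h X) = gact (gact g h) X.
Proof.
move=> gG hG; apply: tensor_iso_inj (tensor_iso_gact_gact X gG hG) _.
exact: gactE (Ginv_gact gG hG).
Qed.

Lemma gact_inj g : injective (gact g).
Proof.
case gG: (g \in G); last by move=> x y; rewrite /gact gG.
have g'G := Ginv_dual gG.
have g'g : gact (fr_dual g) g = one.
  by apply: tensor_iso_inj (gactE g g'G) _; move/GinvP: g'G; rewrite fr_dualK.
apply: (can_inj (g := gact (fr_dual g))) => X.
by rewrite gactA // g'g gact1.
Qed.

Definition gperm g : {perm C} := perm (@gact_inj g).

Definition Gperm : {set {perm C}} := [set gperm g | g in G].

Lemma Gperm_group_set : group_set Gperm.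
Proof.
apply/group_setP; split.
  apply/imsetP; exists one; first exact: Ginv1.
  by apply/permP => X; rewrite perm1 permE gact1.
move=> _ _ /imsetP[g gG ->] /imsetP[h hG ->]; apply/imsetP.
by exists (gact h g); [apply: Ginv_gact | apply/permP => X; rewrite permM !permE gactA].
Qed.

Canonical Gperm_group := Group Gperm_group_set.

Lemma card_Gperm : #|Gperm| = #|G|.
Proof.
apply: card_in_imset => g h gG hG /(congr1 (fun s : {perm C} => s one)).
by rewrite !permE gact_unit ?gact_unit.
Qed.

Lemma stab_eq_Ginv X : (forall g, g \in G -> gact g X = X) -> stab X = G.
Proof.
move=> fixX; apply/setP => g; rewrite inE.
by case gG: (g \in G) => //=; apply/forallP => l; rewrite (gactE X gG) fixX.
Qed.

Section FPdim.
Local Open Scope ring_scope.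
Variables (R : realFieldType) (d : C -> R).
Hypothesis FPd : is_FPdim d.

Lemma FPdim_gact g X : g \in G -> d (gact g X) = d g * d X.
Proof.
move=> gG; rewrite FPd.2.
rewrite (eq_bigr _ (fun k _ => congr1 (fun n : nat => n%:R * d k) (gactE X gG k))).
rewrite (bigD1 (gact g X)) //= eqxx mul1r big1 ?addr0 // => k /negbTE ->.
by rewrite mul0r.
Qed.

(* Tensoring with g permutes the simples, so it fixes the total dimension
   \sum_X d X > 0 while multiplying it by d g. *)
Lemma FPdim_Ginv g : g \in G -> d g = 1.
Proof.
move=> gG; have sum_gt0 : 0 < \sum_X d X.
  rewrite (bigD1 one) //=; apply: ltr_wpDr; last exact: FPd.1.
  by apply: sumr_ge0 => X _; apply/ltW/FPd.1.
have : \sum_X d X = d g * \sum_X d X.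
  rewrite {1}(reindex_inj (@gact_inj g)) mulr_sumr.
  by apply: eq_bigr => X _; rewrite FPdim_gact.
move/eqP; rewrite -subr_eq0 -{1}[\sum_X _]mul1r -mulrBl mulf_eq0.
by rewrite (gt_eqF sum_gt0) orbF subr_eq0 => /eqP <-.
Qed.

Lemma FPdim_gact_id g X : g \in G -> d (gact g X) = d X.
Proof. by move=> gG; rewrite FPdim_gact // FPdim_Ginv // mul1r. Qed.

Lemma Gperm_acts_Irr alpha : [acts Gperm, on Irr_of d alpha | 'P].
Proof.
apply/actsP => _ /imsetP[g gG ->] X /=.
by rewrite /aperm permE !inE FPdim_gact_id.
Qed.

End FPdim.
End InvertibleAction.

Theorem lemma2p1 (C : fusion_ring) (R : realFieldType) (d : C -> R)
  (hd : is_FPdim d) (p n : nat) (hp : prime p)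
  (hG : #|Ginv C| = (p ^ n)%N)
  (alpha : R) (halpha : (1 < alpha)%R)
  (hcop : coprime #|Irr_of d alpha| p) :
  exists2 X : C, X \in Irr_of d alpha & stab X = Ginv C.
Proof.
have pG : pgroup p (Gperm_group C).
  by rewrite /pgroup card_Gperm hG pnatX pnat_id ?orbT.
have [X XI fixX] := pgroup_fixed_point hp pG (Gperm_acts_Irr hd alpha) hcop.
exists X => //; apply: stab_eq_Ginv => g gG.
by have := fixX _ (imset_f (@gperm C) gG); rewrite /= /aperm permE.
Qed.
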